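(* Let $T$ be a compact metric space and $K\subset T$ closed. The set $C_K^+=\{M\in M_p(\mathbb{C}_0):\forall f\in[M],\ f\not<_K\max(M)\}$ is $\mathcal M_p$-measurable, and for every continuous function $g$ defined (at least) on $K$, the set $C_K^-(g)=\{M\in M_p(\mathbb{C}_0):\forall f\in[M],\ f<_Kg\}$ is $\mathcal M_p$-measurable.
   Context: $\mathbb{C}_0$ is the set of continuous $f:T\to[0,\infty)$ not identically zero, with the sup norm. $M_p(\mathbb{C}_0)$ is the set of point measures $M=\sum_{i\in I}\delta_{f_i}$ on $\mathbb{C}_0$ ($I$ countable) with $\{i:\|f_i\|>\varepsilon\}$ finite for all $\varepsilon>0$; $\mathcal M_p$ is the $\sigma$-algebra generated by the maps $M\mapsto M(A)$, $A\subset\mathbb{C}_0$ Borel. $[M]$ is the set of atoms of $M$, $\max(M)(s)=\max\{f(s):f\in[M]\}$ ($0$ if $M=0$). For $f,g$ on $K$: $f<_Kg$ iff $f(s)<g(s)$ for all $s\in K$; $f\not<_Kg$ iff $f(s)\ge g(s)$ for some $s\in K$. *)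

From HB Require Import structures.
From mathcomp Require Import all_boot all_order all_algebra.
From mathcomp Require Import all_classical all_reals all_analysis.
From mathcomp Require Import measurable_realfun.
Set Implicit Arguments. Unset Strict Implicit. Unset Printing Implicit Defensive.
Import Order.TTheory GRing.Theory Num.Theory.
Import numFieldNormedType.Exports.
Local Open Scope classical_set_scope.
Local Open Scope ring_scope.

Section Defs.
Context {R : realType} {T : pseudoMetricType R}.

Definition supnorm (f : T -> R) : R := sup (range (fun t => `|f t|)).
Definition supdist (f g : T -> R) : R := sup (range (fun t => `|f t - g t|)).

Definition C0 : set (T -> R) :=
  [set f : T -> R | continuous f /\ (forall t, 0 <= f t) /\ exists t, f t != 0].

Definition C0_open (U : set (T -> R)) : Prop :=
  U `<=` C0 /\ forall f, U f -> exists2 e : R, 0 < e &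
    forall g, C0 g -> supdist f g < e -> U g.

Definition C0_borel : set (set (T -> R)) := <<s C0, C0_open >>.

(* A point measure M = sum_i delta_{f_i} is represented by its multiplicity
   function m : f |-> #{i | f_i = f}. *)
Definition is_pm (m : (T -> R) -> nat) : Prop :=
  (forall f, (0 < m f)%N -> C0 f) /\
  forall e : R, 0 < e -> finite_set [set f | (0 < m f)%N /\ e < supnorm f].

Definition Mp : set ((T -> R) -> nat) := [set m | is_pm m].

Definition pm_count (m : (T -> R) -> nat) (A : set (T -> R)) : \bar R :=
  (\esum_(f in A) ((m f)%:R)%:E)%E.

Definition Mp_gen : set (set ((T -> R) -> nat)) :=
  [set S | exists (A : set (T -> R)) (B : set (\bar R)),
     [/\ C0_borel A, measurable (B : set (\bar R)) & S = [set m | Mp m /\ B (pm_count m A)]]].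

Definition Mp_measurable : set (set ((T -> R) -> nat)) := <<s Mp, Mp_gen >>.

Definition atoms (m : (T -> R) -> nat) : set (T -> R) := [set f | (0 < m f)%N].

(* max(M)(s) = max {f(s) : f in [M]}, 0 if M = 0 (all f(s) >= 0) *)
Definition maxM (m : (T -> R) -> nat) (s : T) : R :=
  sup ([set 0] `|` [set f s | f in atoms m]).

Definition CKplus (K : set T) : set ((T -> R) -> nat) :=
  [set m | Mp m /\ forall f, atoms m f -> exists2 s, K s & maxM m s <= f s].

Definition CKminus (K : set T) (g : T -> R) : set ((T -> R) -> nat) :=
  [set m | Mp m /\ forall f, atoms m f -> forall s, K s -> f s < g s].

End Defs.

From HB Require Import structures.
From mathcomp Require Import all_boot all_order all_algebra.
From mathcomp Require Import all_classical all_reals all_analysis.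
From mathcomp Require Import measurable_realfun.
From mathcomp Require Import lra.
Import Order.TTheory GRing.Theory Num.Theory.
Import numFieldNormedType.Exports.
Local Open Scope classical_set_scope.
Local Open Scope ring_scope.

(* C_K^-(g): the functions below g on K form an open subset U of C_0, because
   K is compact and so f < g on K leaves a positive margin min_K (g - f); and
   M is in C_K^-(g) iff no atom of M lies in the Borel set C_0 \ U.
   C_K^+: M is outside C_K^+ iff some atom f stays strictly below max(M) on K.
   By compactness, finitely many atoms g_1, ..., g_k then beat f on K by a
   uniform margin d.  Cover C_0 by countably many closed cells of diameter
   less than d / 2, described by rational codes; the property that every
   function of the cell of f is beaten, at each point of K, by all functions
   of the cell of some g_j depends only on the codes.  So the complement of
   C_K^+ is the countable union, over such dominating lists of codes, of the
   measurable events "M charges each cell of the list". *)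

Section generated_sigma_algebra_closure.
Context {U : Type} (D : set U) (G : set (set U)).
Local Notation S := <<s D, G >>.

Lemma sigma_algebra_setT : S D.
Proof.
have S0 : S set0 by exact: sigma_algebra0.
by have := sigma_algebraCD S0; rewrite setD0.
Qed.

Lemma sigma_algebra_setU (A B : set U) : S A -> S B -> S (A `|` B).
Proof.
move=> SA SB; rewrite -bigcup2E.
by apply: sigma_algebra_bigcup => -[|[|n]] //=; exact: sigma_algebra0.
Qed.

Lemma sigma_algebra_setI (A B : set U) : A `<=` D -> B `<=` D ->
  S A -> S B -> S (A `&` B).
Proof.
move=> AD BD SA SB.
have -> : A `&` B = D `\` ((D `\` A) `|` (D `\` B)).
  by rewrite setDUr !setDD (setIidr AD) (setIidr BD).
by apply: sigma_algebraCD; apply: sigma_algebra_setU; exact: sigma_algebraCD.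
Qed.

Lemma sigma_algebra_bigcup_countable (I : countType) (P : set I)
    (F : I -> set U) :
  (forall i, P i -> S (F i)) -> S (\bigcup_(i in P) F i).
Proof.
move=> SF; pose F' n := if unpickle n is Some i then
  (if `[< P i >] then F i else set0) else set0.
have -> : \bigcup_(i in P) F i = \bigcup_n F' n.
  apply/seteqP; split => [x [i Pi Fix]|x [n _]].
    by exists (pickle i) => //; rewrite /F' pickleK; case: asboolP.
  rewrite /F'; case: (unpickle n) => // i; case: asboolP => // Pi Fix.
  by exists i.
apply: sigma_algebra_bigcup => n; rewrite /F'.
case: (unpickle n) => [i|]; last exact: sigma_algebra0.
by case: asboolP => [/SF|_] //; exact: sigma_algebra0.
Qed.

End generated_sigma_algebra_closure.

(* [compact_cover] is only stated for pointed spaces. *)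
Section pointed_copy.
Context {T : topologicalType} (a : T).
Definition pointed_at : Type := T.
HB.instance Definition _ := Topological.copy pointed_at T.
HB.instance Definition _ := isPointed.Build pointed_at a.

Lemma pointed_compact_cover_compact {K : set T} : compact K -> cover_compact K.
Proof. by move=> cK; have : @compact pointed_at K by []; rewrite compact_cover. Qed.
End pointed_copy.

Lemma compact_finite_subcover {T : topologicalType} {I : choiceType}
    (K : set T) (V : I -> set T) :
  compact K -> (forall t, K t -> exists i, nbhs t (V i)) ->
  exists s : seq I, forall t, K t -> exists2 i, i \in s & V i t.
Proof.
move=> cK covK; have [[a _]|K0] := pselect (K !=set0); last first.
  by exists [::] => t Kt; case: K0; exists t.
have [|D _ DK] := pointed_compact_cover_compact a cK I setT (fun i => (V i)°)
  (fun i _ => @open_interior _ (V i)).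
  by move=> t /covK[i Vi]; exists i.
by exists (finmap.enum_fset D) => t /DK[i Di /interior_subset]; exists i.
Qed.

Lemma compact_finite_positive_cover {R : realType} {T : topologicalType}
    {I : choiceType} (K : set T) (h : I -> T -> R) :
  compact K -> (forall i, continuous (h i)) ->
  (forall t, K t -> exists i, 0 < h i t) ->
  exists2 d, 0 < d &
    exists s : seq I, forall t, K t -> exists2 i, i \in s & d < h i t.
Proof.
move=> cK ch hK.
have [s sP] : exists s : seq (I * nat),
    forall t, K t -> exists2 p, p \in s & p.2.+1%:R^-1 < h p.1 t.
  apply: (@compact_finite_subcover _ _ K
    (fun p : I * nat => [set t | p.2.+1%:R^-1 < h p.1 t]) cK) => t /hK[i hit].
  exists (i, Num.truncn (h i t)^-1); apply: (cvgr_gt (h i t)); first exact: ch.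
  by rewrite -[ltRHS]invrK ltf_pV2 ?posrE ?invr_gt0 ?ltr0n // truncnS_gt.
exists (\max_(p <- s) p.2).+1%:R^-1; first by rewrite invr_gt0.
exists (map fst s) => t /sP[[i n] ps /= hn].
exists i; first by apply/mapP; exists (i, n).
apply: le_lt_trans hn; rewrite lef_pV2 ?posrE // ler_nat ltnS.
exact: (leq_bigmax_seq (i, n) ps).
Qed.

Section compact_pseudometric.
Context {R : realType} {T : pseudoMetricType R}.
Hypothesis cT : compact [set: T].

Lemma compact_unif_continuous (f : T -> R) : continuous f ->
  forall e, 0 < e -> exists2 d, 0 < d & forall y z, ball y d z -> `|f y - f z| < e.
Proof.
move=> cf e e0.
pose P d y := forall z, ball y d z -> `|f y - f z| < e.
have small_d : \forall d \near 0^'+, [set: T] `<=` P d.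
  apply: ((compact_near_coveringP _).1 cT R (0^'+) P _) => x _.
  have /nbhs_ballP[r r0 fr] : \forall z \near x, `|f x - f z| < e / 2.
    by apply: cvgr_dist_lt; [exact: cf | exact: divr_gt0].
  near=> y d => z yd.
  have xy : ball x (r / 2) y by near: y; apply: nbhsx_ballx; exact: divr_gt0.
  have dr : d < r / 2 by near: d; apply: nbhs_right_lt; exact: divr_gt0.
  have xz : ball x r z.
    by rewrite (splitr r); apply: ball_triangle xy (le_ball (ltW dr) yd).
  have xyr : ball x r y by apply: le_ball xy; have : 0 < r := r0; lra.
  have := fr _ xz; have := fr _ xyr; rewrite /= distrC.
  have := ler_distD (f x) (f y) (f z); lra.
near (0 : R)^'+ => d.
exists d; first by near: d; exact: nbhs_right_gt.
by move=> y z; apply: (near small_d d).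
Unshelve. all: by end_near.
Qed.

Lemma compact_finite_net (e : R) : 0 < e ->
  exists s : seq T, forall t, exists2 x, x \in s & ball x e t.
Proof.
move=> e0; have [s sP] := @compact_finite_subcover _ _ _ (fun x => ball x e) cT
  (fun t _ => ex_intro _ t (nbhsx_ballx t e e0)).
by exists s => t; exact: sP.
Qed.

Lemma continuous_le_sup (phi : T -> R) t :
  continuous phi -> phi t <= sup (range phi).
Proof.
move=> cphi; apply: ub_le_sup; last by exists t.
have [M [_ HM]] := compact_bounded (continuous_compact (continuous_subspaceT cphi) cT).
exists (M + 1) => _ [x _ <-]; apply: le_trans (ler_norm _) _.
by apply: (HM (M + 1)); [lra | exists x].
Qed.

End compact_pseudometric.

Lemma finite_set_has_ubound {R : realType} {A : set R} :
  finite_set A -> has_ubound A.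
Proof.
move=> /finite_compact/compact_bounded[M [_ HM]]; exists (M + 1) => x Ax.
by apply: le_trans (ler_norm x) _; apply: (HM (M + 1)) => //; lra.
Qed.

Section C0_topology.
Context {R : realType} {T : pseudoMetricType R}.
Hypothesis cT : compact [set: T].

Lemma le_supdist (f g : T -> R) t : continuous f -> continuous g ->
  `|f t - g t| <= supdist f g.
Proof.
move=> cf cg; apply: (continuous_le_sup cT (fun t => `|f t - g t|)) => x.
by apply: cvg_norm; apply: cvgB; [exact: cf | exact: cg].
Qed.

Lemma le_supnorm (f : T -> R) t : continuous f -> f t <= supnorm f.
Proof.
move=> cf; apply: le_trans (ler_norm _) _.
by apply: (continuous_le_sup cT (fun t => `|f t|)) => x; apply: cvg_norm; exact: cf.
Qed.

Lemma C0_open_borel (U : set (T -> R)) : C0_open U -> C0_borel U.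
Proof. exact: sub_sigma_algebra. Qed.

Lemma C0_open_exists_gt (I : Type) (Phi : I -> (T -> R) -> R) (c : R) :
  (forall i g h d, C0 g -> C0 h -> (forall t, `|g t - h t| <= d) ->
     Phi i g <= Phi i h + 2 * d) ->
  C0_open [set g | C0 g /\ exists i, c < Phi i g].
Proof.
move=> PhiL; split=> [g []//|g [Cg [i ci]]].
exists ((Phi i g - c) / 2) => [|h Ch gh]; first by rewrite divr_gt0 // subr_gt0.
split=> //; exists i; have [cg _] := Cg; have [ch _] := Ch.
have := PhiL i g h _ Cg Ch (fun t => le_supdist _ _ t cg ch); lra.
Qed.

Lemma C0_borel_forall_le (I : Type) (Phi : I -> (T -> R) -> R) (c : R) :
  (forall i g h d, C0 g -> C0 h -> (forall t, `|g t - h t| <= d) ->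
     Phi i g <= Phi i h + 2 * d) ->
  C0_borel [set g | C0 g /\ forall i, Phi i g <= c].
Proof.
move=> PhiL; have -> : [set g | C0 g /\ forall i, Phi i g <= c] =
    C0 `\` [set g | C0 g /\ exists i, c < Phi i g].
  apply/seteqP; split=> [g [Cg gc]|g [Cg ngc]].
    by split=> // -[_ [i]]; rewrite ltNge gc.
  split=> // i; rewrite leNgt; apply/negP => ci; apply: ngc.
  by split=> //; exists i.
by apply: sigma_algebraCD; apply: C0_open_borel; exact: C0_open_exists_gt.
Qed.

Lemma C0_open_lt_on (K : set T) (g : T -> R) :
  closed K -> {within K, continuous g} ->
  C0_open [set f | C0 f /\ forall s, K s -> f s < g s].
Proof.
move=> clK cg; split=> [f []//|f [Cf fg]]; have [cf _] := Cf.
have [[s0 Ks0]|K0] := pselect (K !=set0); last first.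
  by exists 1 => // h Ch _; split=> // s Ks; case: K0; exists s.
have cK : compact K := subclosed_compact clK cT (@subsetT _ K).
have [c /set_mem Kc cmin] := compact_EVT_min (ex_intro _ s0 Ks0) cK
  (within_continuousB cg (continuous_subspaceT cf)).
exists (g c - f c) => [|h Ch fh]; first by rewrite subr_gt0 fg.
split=> // s Ks; have [ch _] := Ch.
have gfs : g c - f c <= g s - f s := cmin s (mem_set Ks).
have := le_supdist _ _ s cf ch; have := ler_norm (h s - f s); rewrite distrC; lra.
Qed.

End C0_topology.

Section point_measures.
Context {R : realType} {T : pseudoMetricType R}.
Local Notation pm := ((T -> R) -> nat).

Lemma Mp_atoms_C0 {m : pm} {f : T -> R} : Mp m -> atoms m f -> C0 f.
Proof. by move=> [mC _]; exact: mC. Qed.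

Lemma pm_count_neq0 (m : pm) (A : set (T -> R)) :
  pm_count m A != 0%E <-> atoms m `&` A !=set0.
Proof.
split=> [mA|[f [mf Af]]].
  apply: contrapT => mA0; move/eqP: mA; apply; apply: esum1 => f Af.
  by case: (posnP (m f)) => [->//|mf]; case: mA0; exists f.
apply/negP => /eqP mA0; have : (1 <= pm_count m A)%E.
  apply: esum_ge; exists [set f]; first by split; [exact: finite_set1 | move=> _ ->].
  by rewrite fsbig_set1 lee_fin ler1n.
by rewrite mA0 lee_fin ler10.
Qed.

Lemma Mp_measurable_atoms_meet (A : set (T -> R)) : C0_borel A ->
  Mp_measurable [set m | Mp m /\ atoms m `&` A !=set0].
Proof.
move=> bA; have -> : [set m | Mp m /\ atoms m `&` A !=set0] =
    [set m | Mp m /\ (~` [set 0%E]) (pm_count m A)].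
  apply/seteqP; split=> m [Mm mA]; split=> //.
    by apply/eqP/pm_count_neq0.
  by apply/pm_count_neq0/eqP.
apply: sub_sigma_algebra; exists A, (~` [set 0%E]); split=> //.
exact/measurableC/emeasurable_set1.
Qed.

Lemma Mp_measurable_atoms_sub (A : set (T -> R)) : C0_borel A ->
  Mp_measurable [set m | Mp m /\ atoms m `<=` A].
Proof.
move=> bA; have -> : [set m | Mp m /\ atoms m `<=` A] =
    Mp `\` [set m | Mp m /\ atoms m `&` (C0 `\` A) !=set0].
  apply/seteqP; split=> [m [Mm mA]|m [Mm nmA]].
    by split=> // -[_ [f [/mA Af [_ nAf]]]].
  split=> // f mf; apply: contrapT => nAf; apply: nmA; split=> //.
  by exists f; split=> //; split=> //; exact: Mp_atoms_C0 Mm mf.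
by apply: sigma_algebraCD; apply: Mp_measurable_atoms_meet; exact: sigma_algebraCD.
Qed.

Lemma Mp_measurable_atoms_meet_all (I : eqType) (A : I -> set (T -> R))
    (l : seq I) :
  (forall i, C0_borel (A i)) ->
  Mp_measurable [set m | Mp m /\ forall i, i \in l -> atoms m `&` A i !=set0].
Proof.
move=> bA; elim: l => [|j l IHl].
  have -> : [set m | Mp m /\ forall i, i \in [::] -> atoms m `&` A i !=set0] = Mp.
    by apply/seteqP; split=> [m []//|m Mm]; split.
  exact: sigma_algebra_setT.
have -> : [set m | Mp m /\ forall i, i \in j :: l -> atoms m `&` A i !=set0] =
    [set m | Mp m /\ atoms m `&` A j !=set0] `&`
    [set m | Mp m /\ forall i, i \in l -> atoms m `&` A i !=set0].
  apply/seteqP; split=> [m [Mm mA]|m [[Mm mAj] [_ mA]]].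
    split; split=> //; first by apply: mA; rewrite inE eqxx.
    by move=> i il; apply: mA; rewrite inE il orbT.
  by split=> // i; rewrite inE => /predU1P[->|/mA].
apply: sigma_algebra_setI; [by move=> m [] | by move=> m [] | | exact: IHl].
exact: Mp_measurable_atoms_meet.
Qed.

Lemma maxM_gt (m : pm) s y : 0 <= y -> y < maxM m s ->
  exists2 g, atoms m g & y < g s.
Proof.
move=> y0 /(sup_gt (ex_intro _ 0 (or_introl erefl)))[_ [->|[g mg <-]] yg].
  by move: yg; rewrite ltNge y0.
by exists g.
Qed.

Hypothesis cT : compact [set: T].

Lemma maxM_has_ubound (m : pm) s : Mp m ->
  has_ubound ([set 0] `|` [set f s | f in atoms m]).
Proof.
move=> [mC mfin].
have [M MP] := finite_set_has_ubound (finite_image supnorm (mfin 1 ltr01)).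
exists (Num.max 1 M) => _ [->|[f mf <-]]; first by rewrite le_max ler01.
have fs := le_supnorm cT f s (mC f mf).1.
rewrite le_max; case: (leP (supnorm f) 1) => [f1|f1]; first by rewrite (le_trans fs f1).
by apply/orP; right; apply: le_trans fs (MP _ _); exists f.
Qed.

Lemma maxM_ge (m : pm) f s : Mp m -> atoms m f -> f s <= maxM m s.
Proof.
move=> Mm mf; rewrite /maxM; apply: (ub_le_sup (maxM_has_ubound _ s Mm)).
by right; exists f.
Qed.

End point_measures.

Definition code := (nat * seq rat * rat)%type.

Section code_cells.
Context {R : realType} {T : pseudoMetricType R}.
Hypothesis cT : compact [set: T].
Variable net : nat -> seq T.
Hypothesis netP : forall n t, exists2 x, x \in net n & ball x n.+1%:R^-1 t.

(* The cell of the code (n, q, c): the functions of C_0 oscillating by at most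
   c on balls of radius 1/(n+1) and within c of the rational values q on the
   1/(n+1)-net [net n] (the value at x being the entry of q at the position of
   x in [net n]). *)
Definition code_cell (i : code) : set (T -> R) :=
  let: (n, q, c) := i in
  [set g | [/\ C0 g,
    forall y z, ball y n.+1%:R^-1 z -> `|g y - g z| <= ratr c &
    forall x, x \in net n -> `|g x - ratr (nth 0 q (index x (net n)))| <= ratr c]].

Lemma code_cell_close i g h t : code_cell i g -> code_cell i h ->
  `|g t - h t| <= 4 * ratr i.2.
Proof.
case: i => [[n q] c] [_ gm ga] [_ hm ha] /=; have [x xn xt] := netP n t.
set a : R := ratr (nth 0 q (index x (net n))).
have := gm _ _ xt; have := hm _ _ xt; have := ga _ xn; have := ha _ xn.
have := ler_distD (g x) (g t) (h t); have := ler_distD a (g x) (h t).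
have := ler_distD (h x) a (h t); rewrite (distrC (g t) (g x)) (distrC a (h x)); lra.
Qed.

Lemma code_cell_cover f (c : rat) : C0 f -> (0 < c)%R ->
  exists n q, code_cell (n, q, c) f.
Proof.
move=> Cf c0; have [cf _] := Cf; have c0' : 0 < ratr c :> R by rewrite ltr0q.
have [d d0 fd] := compact_unif_continuous cT f cf _ c0'.
pose n := Num.truncn d^-1.
have nd : n.+1%:R^-1 <= d.
  by rewrite -[leRHS]invrK lef_pV2 ?posrE ?invr_gt0 ?ltr0n // ltW // truncnS_gt.
have /choice[a fa] : forall x, exists a : rat, `|f x - ratr a| <= ratr c.
  move=> x; have /rat_in_itvoo[a] : f x - ratr c < f x + ratr c by lra.
  rewrite in_itv /= => /andP[xa ax]; exists a; apply/ltW; rewrite ltr_norml; lra.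
exists n, (map a (net n)); split=> // [y z /(le_ball nd)/fd/ltW //|x xn].
by rewrite (nth_map x) ?index_mem // nth_index.
Qed.

Lemma code_cell_borel i : C0_borel (code_cell i).
Proof.
case: i => [[n q] c]; set a := fun x => ratr (nth 0 q (index x (net n))) : R.
pose I := ({yz : T * T | ball yz.1 n.+1%:R^-1 yz.2} + {x : T | x \in net n})%type.
pose Phi (j : I) (g : T -> R) := match j with
  | inl yz => `|g (sval yz).1 - g (sval yz).2|
  | inr x => `|g (sval x) - a (sval x)| end.
have -> : code_cell (n, q, c) = [set g | C0 g /\ forall j, Phi j g <= ratr c].
  apply/seteqP; split=> [g [Cg gm ga]|g [Cg gP]].
    by split=> // -[[[y z] yz]|[x xn]]; [exact: gm | exact: ga].
  split=> // [y z yz|x xn].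
    exact: (gP (inl (exist _ (y, z) yz))).
  exact: (gP (inr (exist _ x xn))).
apply: C0_borel_forall_le => // -[[[y z] _]|[x _]] g h d _ _ ghd /=.
  have := ghd y; have := ghd z; have := ler_distD (h y) (g y) (g z).
  have := ler_distD (h z) (h y) (g z); rewrite (distrC (h z)); lra.
have := ghd x; have := ler_distD (h x) (g x) (a x).
have := normr_ge0 (g x - h x); lra.
Qed.

Variable K : set T.
Hypothesis clK : closed K.

Definition code_dominates (i0 : code) (ls : seq code) : Prop :=
  forall f, code_cell i0 f -> forall t, K t ->
    exists2 j, j \in ls & forall g, code_cell j g -> f t < g t.

Definition meets_cells (l : seq code) : set ((T -> R) -> nat) :=
  [set m | Mp m /\ forall j, j \in l -> atoms m `&` code_cell j !=set0].

Lemma atom_below_maxM_dominating_codes m f : Mp m -> atoms m f ->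
    (forall s, K s -> f s < maxM m s) ->
  exists i0 ls, code_dominates i0 ls /\ meets_cells (i0 :: ls) m.
Proof.
move=> Mm mf fM; have Cf := Mp_atoms_C0 Mm mf; have [cf [f0 _]] := Cf.
have /choice[G GP] : forall x, exists g, atoms m g /\ (K x -> f x < g x).
  move=> x; have [Kx|nKx] := pselect (K x); last by exists f; split=> // /nKx.
  by have [g mg fg] := maxM_gt _ _ _ (f0 x) (fM x Kx); exists g.
have CG x : C0 (G x) := Mp_atoms_C0 Mm (GP x).1.
have cGf x : continuous (fun t => G x t - f t).
  by move=> t; apply: cvgB; [exact: (CG x).1 | exact: cf].
have Gf_pos t : K t -> exists x, 0 < G x t - f t.
  by move=> Kt; exists t; rewrite subr_gt0; exact: (GP t).2.
have cK : compact K := subclosed_compact clK cT (@subsetT _ K).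
have [d d0 [s sP]] := compact_finite_positive_cover K _ cK cGf Gf_pos.
have /rat_in_itvoo[c] : 0 < d / 8 by lra.
rewrite in_itv /= => /andP[c0 c8]; have c0' : (0 < c)%R by rewrite -(ltr0q R).
have /choice[cell cellP] : forall g, exists i : code, C0 g -> code_cell i g /\ i.2 = c.
  move=> g; have [Cg|nCg] := pselect (C0 g); last by exists (0%N, [::], c) => /nCg.
  by have [n [q gnq]] := code_cell_cover g c Cg c0'; exists (n, q, c).
exists (cell f), (map (cell \o G) s); split.
  move=> f' f'f t Kt; have [x xs xt] := sP t Kt.
  exists (cell (G x)); first exact: map_f.
  move=> g gG; have [fcell fc] := cellP f Cf; have [Gcell Gc] := cellP _ (CG x).
  have := code_cell_close _ _ _ t f'f fcell.
  have := code_cell_close _ _ _ t gG Gcell.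
  rewrite fc Gc (distrC (g t)) => Gg ff'.
  have := ler_norm (f' t - f t); have := ler_norm (G x t - g t); lra.
split=> // j; rewrite inE => /predU1P[->|/mapP[x _ ->]].
  by exists f; split=> //; exact: (cellP f Cf).1.
by exists (G x); split; [exact: (GP x).1 | exact: (cellP _ (CG x)).1].
Qed.

Lemma CKplus_complement : Mp `\` CKplus K =
  \bigcup_(p in [set p : code * seq code | code_dominates p.1 p.2])
    meets_cells (p.1 :: p.2).
Proof.
apply/seteqP; split=> [m [Mm nCK]|m [[i0 ls] /= dom [Mm mcells]]].
  have [f mf fM] : exists2 f, atoms m f & forall s, K s -> f s < maxM m s.
    apply: contrapT => nf; apply: nCK; split=> // f mf; apply: contrapT => nfs.
    apply: nf; exists f => // s Ks; rewrite ltNge; apply/negP => Mf.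
    by apply: nfs; exists s.
  have [i0 [ls [dom mc]]] := atom_below_maxM_dominating_codes _ _ Mm mf fM.
  by exists (i0, ls).
split=> // -[_ CK]; have [f [mf f0]] := mcells i0 (mem_head _ _).
have [s Ks Mfs] := CK f mf; have [j jls jdom] := dom f f0 s Ks.
have [g [mg gj]] := mcells j (mem_behead (jls : j \in behead (i0 :: ls))).
by have := maxM_ge cT _ _ s Mm mg; have := jdom g gj; lra.
Qed.

Lemma Mp_measurable_CKplus : Mp_measurable (CKplus K).
Proof.
have -> : CKplus K = Mp `\` (Mp `\` CKplus K) by rewrite setDD setIidr // => m [].
rewrite CKplus_complement; apply: sigma_algebraCD.
apply: sigma_algebra_bigcup_countable => p _.
exact: Mp_measurable_atoms_meet_all code_cell_borel.
Qed.

End code_cells.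

Lemma Mp_measurable_CKminus {R : realType} {T : pseudoMetricType R}
    (K : set T) (g : T -> R) :
  compact [set: T] -> closed K -> {within K, continuous g} -> Mp_measurable (CKminus K g).
Proof.
move=> cT clK cg; have -> : CKminus K g =
    [set m | Mp m /\ atoms m `<=` [set f | C0 f /\ forall s, K s -> f s < g s]].
  apply/seteqP; split=> m [Mm mP]; split=> // f mf; last exact: (mP f mf).2.
  by split; [exact: Mp_atoms_C0 Mm mf | exact: mP].
by apply: Mp_measurable_atoms_sub; apply: C0_open_borel; exact: C0_open_lt_on.
Qed.

Theorem lemma4 (R : realType) (T : pseudoMetricType R)
  (hT : hausdorff_space T) (cT : compact [set: T]) (K : set T) (hK : closed K) :
  Mp_measurable (CKplus K) /\
  forall g : T -> R, {within K, continuous g} -> Mp_measurable (CKminus K g).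
Proof.
have /choice[net netP] : forall n, exists s : seq T,
    forall t, exists2 x, x \in s & ball x n.+1%:R^-1 t.
  by move=> n; apply: compact_finite_net; rewrite // invr_gt0.
split; first exact: Mp_measurable_CKplus netP _ hK.
by move=> g; exact: Mp_measurable_CKminus.
Qed.
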